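(* Let $0<c<1$, let $n,d$ be such that $\delta=(3c)^{1/3}\left(\frac{\log d}{\log \frac{n}{d^2}}\right)^{1/4}$ satisfies $\delta<1/16$, and let $G$ be a $d$-regular graph on $n$ nodes. If $K$ is a pseudo-clique of $G$, then \[|K| \leq \frac{1 - 8\delta}{1- 13\delta} (d+1).\]
   Context: A dense spot of $G$ is a subgraph $H\subseteq G$ with $|H|\le d+1$ nodes such that every node $x\in H$ has $\deg_H(x)\ge(1-4\delta)d$. A pseudo-clique is a subgraph $K=\bigcup_{H\in\mathcal{H}}H$ where $\mathcal{H}$ is a maximal family of pairwise intersecting (sharing at least one node) dense spots. $|K|$ is the number of nodes of $K$. *)

From mathcomp Require Import all_boot all_order all_algebra.
From mathcomp Require Import reals exp.
Set Implicit Arguments. Unset Strict Implicit. Unset Printing Implicit Defensive.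
Import Order.TTheory GRing.Theory Num.Theory.
Local Open Scope ring_scope.

Definition simple_graph (T : finType) (e : rel T) : Prop :=
  symmetric e /\ irreflexive e.

Definition regular (T : finType) (e : rel T) (d : nat) : Prop :=
  forall x : T, #|[set y | e x y]| = d.

Definition degIn (T : finType) (e : rel T) (H : {set T}) (x : T) : nat :=
  #|[set y in H | e x y]|.

Definition delta (R : realType) (c : R) (n d : nat) : R :=
  powR (3 * c) (3%:R^-1) *
  powR (ln (d%:R) / ln (n%:R / (d%:R ^+ 2))) (4%:R^-1).

(* Dense spot (identified with its node set; H is the induced subgraph). *)
Definition dense_spot (R : realType) (T : finType) (e : rel T) (d : nat)
    (del : R) (H : {set T}) : Prop :=
  (#|H| <= d.+1)%N /\
  forall x, x \in H -> (1 - 4 * del) * d%:R <= (degIn e H x)%:R.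

Definition intersecting_dense_family (R : realType) (T : finType) (e : rel T)
    (d : nat) (del : R) (F : {set {set T}}) : Prop :=
  (forall H, H \in F -> dense_spot e d del H) /\
  (forall H1 H2, H1 \in F -> H2 \in F -> H1 :&: H2 != set0).

Definition maximal_intersecting_dense_family (R : realType) (T : finType)
    (e : rel T) (d : nat) (del : R) (F : {set {set T}}) : Prop :=
  intersecting_dense_family e d del F /\
  forall F' : {set {set T}}, F \subset F' ->
    intersecting_dense_family e d del F' -> F' = F.

Definition pseudo_clique (R : realType) (T : finType) (e : rel T) (d : nat)
    (del : R) (K : {set T}) : Prop :=
  exists F : {set {set T}},
    maximal_intersecting_dense_family e d del F /\ K = cover F.

From mathcomp Require Import all_boot all_order all_algebra.
From mathcomp Require Import reals exp.
From mathcomp Require Import ring lra.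
Import Order.TTheory GRing.Theory Num.Theory.
Local Open Scope ring_scope.

(* Fix a spot H0 of the family. Two dense spots through a common node x each
   contain (1 - 4 delta) d of the at most d neighbours of x, so they share
   (1 - 8 delta) d of them; hence any other spot H sticks out of H0 by at most
   8 delta d nodes, and every node of H has (1 - 12 delta) d neighbours in H0.
   Each node of H0 has at most 4 delta d neighbours outside H0, so double
   counting the edges between K \ H0 and H0 gives
   |K \ H0| (1 - 12 delta) <= 4 delta (d + 1). Neither the maximality of the
   family nor the value of delta matters beyond 0 <= delta < 1/13. *)

Lemma card_set_neighbours (T : finType) (e : rel T) (A : {set T}) (y : T) :
  #|[set z in A | e y z]| = (\sum_(z in A) e y z)%N.
Proof.
rewrite -sum1_card (eq_bigl (fun z => (z \in A) && e y z)) ?big_mkcondr // => z.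
by rewrite inE.
Qed.

Lemma sum_card_neighbours_sym (T : finType) (e : rel T) (A B : {set T}) :
  symmetric e ->
  (\sum_(y in A) #|[set z in B | e y z]| =
   \sum_(z in B) #|[set y in A | e z y]|)%N.
Proof.
move=> e_sym; under eq_bigr do rewrite card_set_neighbours.
under [RHS]eq_bigr do rewrite card_set_neighbours.
by rewrite exchange_big; apply: eq_bigr => z _; apply: eq_bigr => y _; rewrite e_sym.
Qed.

Section DenseSpots.
Variables (R : realType) (T : finType) (e : rel T) (d : nat) (D : R).
Hypothesis e_sym : symmetric e.
Hypothesis e_irr : irreflexive e.
Hypothesis e_reg : regular e d.

Lemma dense_spot_card_setD {H H0 : {set T}} {x : T} :
  dense_spot e d D H -> dense_spot e d D H0 -> x \in H -> x \in H0 ->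
  #|H :\: H0|%:R <= 8 * D * d%:R.
Proof.
move=> [H_le H_deg] [_ H0_deg] xH xH0.
set N := [set z in H | e x z]; set N0 := [set z in H0 | e x z].
have N_deg := H_deg x xH; have N0_deg := H0_deg x xH0.
have NUN0_le : #|N :|: N0|%:R <= d%:R :> R.
  rewrite ler_nat -(e_reg x); apply: subset_leq_card; apply/subsetP => z.
  by rewrite !inE => /orP[] /andP[_ ->].
have NIN0_lt : (#|N :&: N0|.+1)%:R <= #|H :&: H0|%:R :> R.
  have <- : #|x |: (N :&: N0)| = #|N :&: N0|.+1.
    by rewrite cardsU1 !inE e_irr andbF.
  rewrite ler_nat; apply: subset_leq_card; apply/subsetP => z; rewrite !inE.
  by case/orP=> [/eqP -> | /andP[/andP[-> _] /andP[-> _]]]; rewrite ?xH ?xH0.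
have UI : #|N :|: N0|%:R + #|N :&: N0|%:R = #|N|%:R + #|N0|%:R :> R.
  by rewrite -!natrD cardsUI.
have H_split : #|H :&: H0|%:R + #|H :\: H0|%:R = #|H|%:R :> R.
  by rewrite -natrD cardsID.
move: H_le NIN0_lt; rewrite -(ler_nat R) -!natr1.
rewrite /degIn -/N -/N0 in N_deg N0_deg; lra.
Qed.

Lemma degIn_intersecting_dense_spot {H H0 : {set T}} {y : T} :
  dense_spot e d D H -> dense_spot e d D H0 -> H :&: H0 != set0 -> y \in H ->
  (1 - 12 * D) * d%:R <= (degIn e H0 y)%:R.
Proof.
move=> sH sH0 /set0Pn[x]; rewrite inE => /andP[xH xH0] yH.
have HH0_small := dense_spot_card_setD sH sH0 xH xH0.
have y_deg := sH.2 y yH.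
have degH_le : (degIn e H y)%:R <= (degIn e H0 y)%:R + #|H :\: H0|%:R :> R.
  rewrite -natrD ler_nat; apply: leq_trans (leq_card_setU _ _).
  apply: subset_leq_card; apply/subsetP => z; rewrite !inE => /andP[-> ->].
  by case: (z \in H0).
lra.
Qed.

Lemma card_neighbours_outside_dense_spot {A H0 : {set T}} {z : T} :
  dense_spot e d D H0 -> [disjoint A & H0] -> z \in H0 ->
  #|[set y in A | e z y]|%:R <= 4 * D * d%:R.
Proof.
move=> [_ H0_deg] A_H0 zH0.
have z_deg := H0_deg z zH0; rewrite /degIn in z_deg.
have split_nbrs : #|[set y in H0 | e z y]|%:R + #|[set y in A | e z y]|%:R
                  <= d%:R :> R.
  rewrite -natrD ler_nat -cardsUI.
  have -> : [set y in H0 | e z y] :&: [set y in A | e z y] = set0.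
    apply/setP => y; rewrite !inE.
    by case: (boolP (y \in A)) => [/(disjointFr A_H0) -> | _]; rewrite ?andbF.
  rewrite cards0 addn0 -(e_reg z); apply: subset_leq_card; apply/subsetP => y.
  by rewrite !inE => /orP[] /andP[_ ->].
lra.
Qed.

Lemma card_cover_setD_mul_le {F : {set {set T}}} {H0 : {set T}} :
  intersecting_dense_family e d D F -> H0 \in F ->
  #|cover F :\: H0|%:R * ((1 - 12 * D) * d%:R) <= #|H0|%:R * (4 * D * d%:R).
Proof.
move=> [F_dense F_meet] H0F; set A := cover F :\: H0.
have A_H0 : [disjoint A & H0] by rewrite disjoints_subset subsetDr.
rewrite [#|A|%:R * _]mulr_natl [#|H0|%:R * _]mulr_natl -!sumr_const.
apply: le_trans (_ : ((\sum_(y in A) degIn e H0 y)%N)%:R <= _).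
  rewrite natr_sum; apply: ler_sum => y; rewrite inE => /andP[_ /bigcupP[H HF yH]].
  exact: (degIn_intersecting_dense_spot (F_dense H HF) (F_dense H0 H0F)
           (F_meet H H0 HF H0F) yH).
rewrite /degIn sum_card_neighbours_sym // natr_sum; apply: ler_sum => z zH0.
exact: card_neighbours_outside_dense_spot (F_dense H0 H0F) A_H0 zH0.
Qed.

Lemma card_cover_le (F : {set {set T}}) :
  intersecting_dense_family e d D F -> (0 < d)%N -> 0 <= D -> 13 * D < 1 ->
  #|cover F|%:R <= (1 - 8 * D) / (1 - 13 * D) * (d.+1)%:R.
Proof.
move=> Fdense d_gt0 D_ge0 D_lt; have D13_gt0 : 0 < 1 - 13 * D by lra.
rewrite mulrAC ler_pdivlMr //.
have [-> | [H0 H0F]] := set_0Vmem F.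
  by rewrite /cover big_set0 cards0 mul0r mulr_ge0 // ?ler0n //; lra.
have [H0_le _] := Fdense.1 H0 H0F; rewrite -(ler_nat R) in H0_le.
have split_K : #|cover F :&: H0|%:R + #|cover F :\: H0|%:R = #|cover F|%:R :> R.
  by rewrite -natrD cardsID.
have KH0_le : #|cover F :&: H0|%:R <= #|H0|%:R :> R.
  by rewrite ler_nat; apply/subset_leq_card/subsetIr.
rewrite -split_K; set N := (d.+1)%:R in H0_le *; set h := #|H0|%:R in H0_le KH0_le.
set i := #|_ :&: _|%:R in KH0_le *; set a := #|_ :\: _|%:R.
have a_le : a * (1 - 12 * D) <= 4 * D * N.
  apply: le_trans (_ : 4 * D * h <= _); last by rewrite ler_wpM2l // mulr_ge0.
  have := card_cover_setD_mul_le Fdense H0F.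
  by rewrite mulrA [h * _]mulrA ler_pM2r ?ltr0n // [h * _]mulrC.
have i_le : i * (1 - 13 * D) <= N * (1 - 13 * D).
  by rewrite ler_pM2r // (le_trans KH0_le).
have aD_ge0 : 0 <= a * D by rewrite mulr_ge0 ?ler0n.
have ND_ge0 : 0 <= N * D by rewrite mulr_ge0 ?ler0n.
lra.
Qed.

End DenseSpots.

Theorem lemma6 (R : realType) (c : R) (T : finType) (e : rel T) (d : nat)
  (K : {set T}) :
  0 < c < 1 ->
  (0 < d)%N ->
  (d ^ 2 < #|T|)%N ->
  delta c #|T| d < 16%:R^-1 ->
  simple_graph e ->
  regular e d ->
  pseudo_clique e d (delta c #|T| d) K ->
  (#|K|)%:R <= (1 - 8 * delta c #|T| d) / (1 - 13 * delta c #|T| d) * (d.+1)%:R.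
Proof.
move=> _ d_gt0 _ delta_lt [e_sym e_irr] e_reg [F [[Fdense _] ->]].
have delta_ge0 : 0 <= delta c #|T| d by rewrite mulr_ge0 // powR_ge0.
by apply: card_cover_le => //; lra.
Qed.
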